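(* Let $\mathbb{H}\in\mathbb{C}^{t\times r}$ be a random matrix with $\mathbb{E}[\|\mathbb{H}\|_F^2]<\infty$ whose distribution is absolutely continuous with respect to Lebesgue measure on $\mathbb{C}^{t\times r}$, and let $\rho>0$. Then for every $R\in\mathbb{R}_+$ the infimum $$\inf_{Q\in\mathcal{U}_t}\Pr\big[\log\det(I_r+\mathbb{H}^HQ\mathbb{H})<R\big]$$ is attained, i.e., it is a minimum.
   Context: $\mathcal{U}_t=\{Q\in\mathbb{C}^{t\times t}:Q\succeq0,\ \operatorname{tr}Q\le\rho\}$; $\|A\|_F=\sqrt{\operatorname{tr}(AA^H)}$. *)

From HB Require Import structures.
From mathcomp Require Import all_boot all_order all_algebra.
From mathcomp Require Import all_classical all_reals all_analysis.
From mathcomp Require Import complex.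
Set Implicit Arguments. Unset Strict Implicit. Unset Printing Implicit Defensive.
Import Order.TTheory GRing.Theory Num.Theory.
Local Open Scope classical_set_scope.
Local Open Scope ring_scope.

Definition mxH (R : rcfType) m n (A : 'M[R[i]]_(m, n)) : 'M[R[i]]_(n, m) :=
  map_mx (@conjc R) A^T.

Definition psd (R : rcfType) n (Q : 'M[R[i]]_n) : Prop :=
  mxH Q = Q /\ forall v : 'cV[R[i]]_n, 0 <= (mxH v *m Q *m v) ord0 ord0.

Definition U_set (R : rcfType) t (rho : R) : set 'M[R[i]]_t :=
  [set Q | psd Q /\ \tr Q <= (rho%:C)%C].

(* Real coordinates of a complex t x r matrix: identifies C^{t x r} with
   R^{2tr} (the coordinate (i,j,false) is Re A_ij, (i,j,true) is Im A_ij). *)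
Definition mx_coords (R : rcfType) t r (A : 'M[R[i]]_(t, r))
  : 'I_t * 'I_r * bool -> R :=
  fun k => if k.2 then complex.Im (A k.1.1 k.1.2) else complex.Re (A k.1.1 k.1.2).

Definition lebesgue_null (R : realType) (I : finType) (A : set (I -> R)) : Prop :=
  forall eps : R, 0 < eps ->
    exists a b : nat -> I -> R,
      (forall n i, a n i <= b n i) /\
      A `<=` \bigcup_n [set x | forall i, a n i <= x i <= b n i] /\
      (\sum_(0 <= n <oo) ((\prod_i (b n i - a n i))%:E) <= eps%:E)%E.

Definition rmx (R : realType) (T : Type) t r (Hre Him : 'I_t -> 'I_r -> T -> R)
  (w : T) : 'M[R[i]]_(t, r) :=
  \matrix_(i, j) (Complex (Hre i j w) (Him i j w)).

Definition frob2 (R : realType) t r (A : 'M[R[i]]_(t, r)) : R :=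
  \sum_i \sum_j ((complex.Re (A i j)) ^+ 2 + (complex.Im (A i j)) ^+ 2).

(* log det (I_r + H^H Q H); the determinant is real and >= 1 for Q psd. *)
Definition logdet_chan (R : realType) t r (A : 'M[R[i]]_(t, r)) (Q : 'M[R[i]]_t) : R :=
  ln (complex.Re (\det (1%:M + mxH A *m Q *m A))).

Definition outage_event (R : realType) (T : Type) t r
  (Hre Him : 'I_t -> 'I_r -> T -> R) (Q : 'M[R[i]]_t) (Rate : R) : set T :=
  [set w | logdet_chan (rmx Hre Him w) Q < Rate].

From HB Require Import structures.
From mathcomp Require Import all_boot all_order all_algebra.
From mathcomp Require Import all_classical all_reals all_analysis.
From mathcomp Require Import complex.
From mathcomp Require Import measurable_realfun.
From mathcomp Require Import ring lra.
Set Implicit Arguments.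
Unset Strict Implicit.
Unset Printing Implicit Defensive.

Import Order.TTheory GRing.Theory Num.Theory.
Import numFieldNormedType.Exports.
Local Open Scope classical_set_scope.
Local Open Scope ring_scope.

(* For a fixed channel realisation H, Q |-> log det (I + H^H Q H) is continuous,
   so the outage event is open in Q.  A family of events that is open in its
   parameter has lower semicontinuous probability: if Q_k -> Q, the event for Q
   lies in the liminf of the events for Q_k, and continuity from below bounds its
   probability by the liminf of theirs.  U_t is closed and bounded in
   C^{t x t} = R^{2t^2}, hence compact, and a lower semicontinuous function attains
   its infimum on a nonempty compact set. *)

Lemma lower_semicontinuous_compact_min (T : topologicalType) (R : realFieldType)
    (f : T -> R) (A : set T) :
  compact A -> A !=set0 -> lower_semicontinuous (fun x => (f x)%:E) ->
  exists2 c, A c & forall x, A x -> f c <= f x.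
Proof.
move=> cA [x0 Ax0] lsc_f.
(* A cluster point of the filter generated by the nonempty sublevel sets of f on
   A is a minimiser. *)
pose B (b : R) := [set x | A x /\ f x < b].
pose F := filter_from [set b | B b !=set0] B.
have B1 : B (f x0 + 1) !=set0 by exists x0; split; rewrite ?ltrDl.
have FF : ProperFilter F.
  apply: filter_from_proper => //; apply: filter_from_filter; first by exists (f x0 + 1).
  move=> b c Bb Bc; exists (Num.min b c); first by case: leP.
  by move=> x [Ax]; rewrite lt_min => /andP[].
have FA : F A by exists (f x0 + 1) => // x [].
have [c [Ac clFc]] := cA F FF FA.
exists c => // x Ax; rewrite leNgt; apply/negP => fxc.
pose m := (f x + f c) / 2; have [fxm fmc] := midf_lt fxc.
have [V Vc mV] := lsc_f c m (fmc : (m%:E < (f c)%:E)%E).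
have FBm : F (B m) by exists m => //; exists x.
have [y [[_ fym] Vy]] := clFc _ _ FBm Vc.
by have := mV y Vy; rewrite lte_fin ltNge (ltW fym).
Qed.

Lemma lower_semicontinuous_measure_family d (T : measurableType d) (R : realType)
    (X : pseudoMetricType R) (mu : {measure set T -> \bar R}) (E : X -> set T) :
  (forall c, measurable (E c)) -> (forall w, open [set c | E c w]) ->
  lower_semicontinuous (fun c => mu (E c)).
Proof.
move=> mE oE c a a_lt; apply: contrapT => noV.
(* Otherwise some y_k -> c have mu (E y_k) <= a, while E c, being open in c, lies
   in the liminf of the E y_k. *)
have near_c n : exists y, ball c n.+1%:R^-1 y /\ (mu (E y) <= a%:E)%E.
  apply: contrapT => no_y; apply: noV.
  exists (ball c n.+1%:R^-1); first by apply: nbhsx_ballx; rewrite invr_gt0.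
  by move=> y cy; rewrite ltNge; apply/negP => le_ya; apply: no_y; exists y.
have [ys ys_near] := choice near_c.
pose A n := \bigcap_(k in [set k | (n <= k)%N]) E (ys k).
have mA n : measurable (A n).
  by apply: bigcap_measurable => [|k _]; [exists n => /= | exact: mE].
have mUA : measurable (\bigcup_n A n) by exact: bigcupT_measurable.
have ndA : nondecreasing_seq A.
  by move=> m n mn; apply/subsetPset => w Aw k nk; apply: Aw; exact: leq_trans nk.
have EcA : E c `<=` \bigcup_n A n.
  move=> w Ecw; have /nbhs_ballP[e e0 ballE] := open_nbhs_nbhs (conj (oE w) Ecw).
  have [N _ lt_e] := near_infty_natSinv_lt (PosNum e0).
  exists N => // k Nk; apply: ballE.
  by apply: le_ball (ys_near k).1; exact/ltW/lt_e.
have : (mu (\bigcup_n A n) <= a%:E)%E.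
  have mu_cvg := nondecreasing_cvg_mu (mu := mu) mA mUA ndA.
  rewrite -(cvg_lim _ mu_cvg) //; apply: lime_le; first exact: cvgP mu_cvg.
  apply: nearW => n; apply: le_trans (ys_near n).2.
  by apply: le_measure; rewrite ?inE // => w; apply; rewrite /=.
apply/negP; rewrite -ltNge; apply: lt_le_trans a_lt _.
by apply: le_measure; rewrite ?inE.
Qed.

(* [ln] is 0 on nonpositive reals, so for 0 < a the set also contains ]-oo, 0]. *)
Lemma open_ln_lt (R : realType) (a : R) : open [set x : R | ln x < a].
Proof.
rewrite openE => x /= ln_x_lt.
have [x_le0|x_gt0] := leP x 0; last exact: continuous_ln x_gt0 _ (lt_nbhsl ln_x_lt).
rewrite ln0 // in ln_x_lt.
have : nbhs x [set y | y < 1] by apply: lt_nbhsl; exact: le_lt_trans x_le0 _.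
by apply: filterS => y /ltW /ln_le0 /le_lt_trans; apply.
Qed.

Section ComplexParts.
Variable R : rcfType.
Implicit Types x y : R[i].

Lemma ReD x y : complex.Re (x + y) = complex.Re x + complex.Re y.
Proof. by case: x => ? ?; case: y. Qed.

Lemma ImD x y : complex.Im (x + y) = complex.Im x + complex.Im y.
Proof. by case: x => ? ?; case: y. Qed.

Lemma ReN x : complex.Re (- x) = - complex.Re x. Proof. by case: x. Qed.

Lemma ImN x : complex.Im (- x) = - complex.Im x. Proof. by case: x. Qed.

Lemma ReM x y :
  complex.Re (x * y) = complex.Re x * complex.Re y + - (complex.Im x * complex.Im y).
Proof. by case: x => ? ?; case: y. Qed.

Lemma ImM x y :
  complex.Im (x * y) = complex.Re x * complex.Im y + complex.Im x * complex.Re y.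
Proof. by case: x => ? ?; case: y. Qed.

Lemma Re_conj x : complex.Re x^*%C = complex.Re x. Proof. by case: x. Qed.

Lemma Im_conj x : complex.Im x^*%C = - complex.Im x. Proof. by case: x. Qed.

End ComplexParts.

(* [good] is a class of real functions closed under the ring operations, later
   continuity in the parameter or measurability in the sample: det (I + A^H Q A)
   is a polynomial in the real and imaginary parts of the entries of A and Q. *)
Section RingClosedFunctions.
Variables (R : rcfType) (X : Type) (good : (X -> R) -> Prop).
Hypotheses (good_cst : forall c, good (fun _ => c))
  (good_add : forall f g, good f -> good g -> good (fun x => f x + g x))
  (good_mul : forall f g, good f -> good g -> good (fun x => f x * g x))
  (good_opp : forall f, good f -> good (fun x => - f x)).

Definition cgood (f : X -> R[i]) :=
  good (fun x => complex.Re (f x)) /\ good (fun x => complex.Im (f x)).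

Definition mxgood {m n} (M : X -> 'M[R[i]]_(m, n)) := forall i j, cgood (fun x => M x i j).

Lemma cgood_cst c : cgood (fun _ => c).
Proof. by split; apply: good_cst. Qed.

Lemma cgood_add f g : cgood f -> cgood g -> cgood (fun x => f x + g x).
Proof.
move=> [f1 f2] [g1 g2]; split.
- by under eq_fun do rewrite ReD; apply: good_add.
- by under eq_fun do rewrite ImD; apply: good_add.
Qed.

Lemma cgood_opp f : cgood f -> cgood (fun x => - f x).
Proof.
move=> [f1 f2]; split.
- by under eq_fun do rewrite ReN; apply: good_opp.
- by under eq_fun do rewrite ImN; apply: good_opp.
Qed.

Lemma cgood_mul f g : cgood f -> cgood g -> cgood (fun x => f x * g x).
Proof.
move=> [f1 f2] [g1 g2]; split.
- by under eq_fun do rewrite ReM; apply: good_add; [|apply: good_opp]; apply: good_mul.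
- by under eq_fun do rewrite ImM; apply: good_add; apply: good_mul.
Qed.

Lemma cgood_conj f : cgood f -> cgood (fun x => (f x)^*%C).
Proof.
move=> [f1 f2]; split.
- by under eq_fun do rewrite Re_conj.
- by under eq_fun do rewrite Im_conj; apply: good_opp.
Qed.

Lemma cgood_sum (I : Type) (s : seq I) (P : pred I) (F : I -> X -> R[i]) :
  (forall i, cgood (F i)) -> cgood (fun x => \sum_(i <- s | P i) F i x).
Proof.
move=> gF; elim: s => [|a s IH].
  by under eq_fun do rewrite big_nil; apply: cgood_cst.
under eq_fun do rewrite big_cons.
by case: (P a) => //; apply: cgood_add.
Qed.

Lemma cgood_prod (I : Type) (s : seq I) (P : pred I) (F : I -> X -> R[i]) :
  (forall i, cgood (F i)) -> cgood (fun x => \prod_(i <- s | P i) F i x).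
Proof.
move=> gF; elim: s => [|a s IH].
  by under eq_fun do rewrite big_nil; apply: cgood_cst.
under eq_fun do rewrite big_cons.
by case: (P a) => //; apply: cgood_mul.
Qed.

Lemma mxgood_cst m n (A : 'M[R[i]]_(m, n)) : mxgood (fun _ => A).
Proof. by move=> i j; apply: cgood_cst. Qed.

Lemma mxgood_add m n (M N : X -> 'M[R[i]]_(m, n)) :
  mxgood M -> mxgood N -> mxgood (fun x => M x + N x).
Proof. by move=> gM gN i j; under eq_fun do rewrite mxE; apply: cgood_add. Qed.

Lemma mxgood_opp m n (M : X -> 'M[R[i]]_(m, n)) :
  mxgood M -> mxgood (fun x => - M x).
Proof. by move=> gM i j; under eq_fun do rewrite mxE; apply: cgood_opp. Qed.

Lemma mxgood_mul m n p (M : X -> 'M[R[i]]_(m, n)) (N : X -> 'M[R[i]]_(n, p)) :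
  mxgood M -> mxgood N -> mxgood (fun x => M x *m N x).
Proof.
move=> gM gN i j; under eq_fun do rewrite mxE.
by apply: cgood_sum => k; apply: cgood_mul.
Qed.

Lemma mxgood_H m n (M : X -> 'M[R[i]]_(m, n)) : mxgood M -> mxgood (fun x => mxH (M x)).
Proof. by move=> gM i j; under eq_fun do rewrite !mxE; apply: cgood_conj. Qed.

Lemma cgood_det n (M : X -> 'M[R[i]]_n) : mxgood M -> cgood (fun x => \det (M x)).
Proof.
move=> gM; apply: cgood_sum => s; apply: cgood_mul; first exact: cgood_cst.
by apply: cgood_prod => i; apply: gM.
Qed.

Lemma good_Re_det_chan t r (A : X -> 'M[R[i]]_(t, r)) (Q : X -> 'M[R[i]]_t) :
  mxgood A -> mxgood Q ->
  good (fun x => complex.Re (\det (1%:M + mxH (A x) *m Q x *m A x))).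
Proof.
move=> gA gQ; suff [] : cgood (fun x => \det (1%:M + mxH (A x) *m Q x *m A x)) by [].
apply/cgood_det/mxgood_add; first exact: mxgood_cst.
by apply: mxgood_mul => //; apply: mxgood_mul => //; apply: mxgood_H.
Qed.

End RingClosedFunctions.

Section ContinuousComplexFunctions.
Variables (R : realType) (X : topologicalType).
Local Notation cont := (fun g : X -> R => continuous g).

Let cont_cst (c : R) : continuous (fun _ : X => c).
Proof. exact: cst_continuous. Qed.

Let cont_add (f g : X -> R) : continuous f -> continuous g -> continuous (fun x => f x + g x).
Proof. by move=> cf cg x; exact: continuousD (cf x) (cg x). Qed.

Let cont_mul (f g : X -> R) : continuous f -> continuous g -> continuous (fun x => f x * g x).
Proof. by move=> cf cg x; exact: continuousM (cf x) (cg x). Qed.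

Let cont_opp (f : X -> R) : continuous f -> continuous (fun x => - f x).
Proof. by move=> cf x; exact: continuousN (cf x). Qed.

Lemma closed_cgood_eq0 (f : X -> R[i]) : cgood cont f -> closed [set x | f x = 0].
Proof.
case=> Re_f Im_f.
have -> : [set x | f x = 0] =
    (fun x => complex.Re (f x)) @^-1` [set 0] `&` (fun x => complex.Im (f x)) @^-1` [set 0].
  by apply/seteqP; split => x /=; [move=> ->|case: (f x) => a b /= [-> ->]].
by apply: closedI; (apply: preimage_closed; last exact: closed_eq) => x _.
Qed.

Lemma closed_cgood_ge0 (f : X -> R[i]) : cgood cont f -> closed [set x | 0 <= f x].
Proof.
case=> Re_f Im_f.
have -> : [set x | 0 <= f x] = (fun x => complex.Im (f x)) @^-1` [set 0]
    `&` (fun x => complex.Re (f x)) @^-1` [set y | 0 <= y].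
  apply/seteqP; split => x /=; case: (f x) => a b; rewrite lecE /=.
    by move=> /andP[/eqP -> ->].
  by move=> [-> ->]; rewrite eqxx.
by apply: closedI; apply: preimage_closed;
  [move=> x _ | exact: closed_eq | move=> x _ | exact: closed_ge].
Qed.

Lemma closed_U_set_preimage t (rho : R) (M : X -> 'M[R[i]]_t) :
  mxgood cont M -> closed [set x | U_set rho (M x)].
Proof.
move=> cM.
have -> : [set x | U_set rho (M x)] =
   \bigcap_(ij in [set: 'I_t * 'I_t]) [set x | (mxH (M x) - M x) ij.1 ij.2 = 0]
   `&` \bigcap_(v in [set: 'cV[R[i]]_t]) [set x | 0 <= (mxH v *m M x *m v) ord0 ord0]
   `&` [set x | 0 <= (rho%:C)%C - \tr (M x)].
  apply/seteqP; split => x /=.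
    case=> [[herm psd_x] tr_le]; split; first split.
    - by move=> ij _ /=; rewrite herm subrr mxE.
    - by move=> v _; exact: psd_x.
    - by rewrite /= subr_ge0.
  case=> [[herm psd_x] tr_le]; split; first split.
  - by apply/subr0_eq/matrixP => i j; rewrite (herm (i, j)) ?mxE.
  - by move=> v; apply: psd_x.
  - by rewrite -subr_ge0.
apply: closedI; first apply: closedI.
- apply: closed_bigI => ij _; apply: closed_cgood_eq0.
  by apply: mxgood_add => //; [exact: mxgood_H | exact: mxgood_opp].
- apply: closed_bigI => v _; apply: closed_cgood_ge0.
  by apply: mxgood_mul => //; apply: mxgood_mul => //; exact: mxgood_cst.
- have cgood_tr : cgood cont (fun x => (rho%:C)%C - \tr (M x)).
    apply: cgood_add => //.
    by apply: cgood_opp => //; apply: cgood_sum => //; exact: cM.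
  exact: closed_cgood_ge0 cgood_tr.
Qed.

Lemma continuous_Re_det_chan r t (A : 'M[R[i]]_(t, r)) (Q : X -> 'M[R[i]]_t) :
  mxgood cont Q -> continuous (fun x => complex.Re (\det (1%:M + mxH A *m Q x *m A))).
Proof. by move=> cQ; apply: (good_Re_det_chan cont_cst cont_add cont_mul cont_opp). Qed.

End ContinuousComplexFunctions.

Section PsdEntries.
Variables (R : rcfType) (t : nat).
Implicit Types Q : 'M[R[i]]_t.

Lemma mxHD m n (A B : 'M[R[i]]_(m, n)) : mxH (A + B) = mxH A + mxH B.
Proof. by apply/matrixP => a b; rewrite /mxH !mxE raddfD. Qed.

Lemma mxHZ m n (z : R[i]) (A : 'M[R[i]]_(m, n)) : mxH (z *: A) = z^*%C *: mxH A.
Proof. by apply/matrixP => a b; rewrite /mxH !mxE rmorphM. Qed.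

Lemma mxH_delta (i : 'I_t) : mxH (delta_mx i 0 : 'cV[R[i]]_t) = delta_mx 0 i.
Proof. by apply/matrixP => a b; rewrite /mxH !mxE conjc_nat andbC. Qed.

Lemma mul_delta_mx_delta Q i j :
  (delta_mx 0 i : 'rV_t) *m Q *m (delta_mx j 0 : 'cV_t) = (Q i j)%:M.
Proof. by apply/matrixP => a b; rewrite !ord1 -rowE -colE !mxE eqxx mulr1n. Qed.

Lemma quad_form_pair Q i j z (v := delta_mx i 0 + z *: delta_mx j 0 : 'cV_t) :
  (mxH v *m Q *m v) ord0 ord0 =
  Q i i + z * Q i j + z^*%C * Q j i + z^*%C * z * Q j j.
Proof.
rewrite /v mxHD mxHZ !mxH_delta !mulmxDl !mulmxDr -!scalemxAl -!scalemxAr.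
by rewrite !mul_delta_mx_delta !mxE !eqxx !mulr1n; ring.
Qed.

Lemma psd_diag Q k : psd Q -> complex.Im (Q k k) = 0 /\ 0 <= complex.Re (Q k k).
Proof.
case=> _ /(_ (delta_mx k 0)); rewrite mxH_delta mul_delta_mx_delta mxE eqxx mulr1n.
by case: (Q k k) => a b; rewrite lecE /= => /andP[/eqP -> ->].
Qed.

Lemma U_set_entry_bound (rho : R) Q : U_set rho Q ->
  forall i j, `|complex.Re (Q i j)| <= rho /\ `|complex.Im (Q i j)| <= rho.
Proof.
case=> [[hermQ psdQ] trQ] i j.
have diag k := @psd_diag Q k (conj hermQ psdQ).
have conjQ a b : Q b a = (Q a b)^*%C.
  by have /matrixP/(_ b a) := hermQ; rewrite /mxH !mxE.
have sum_diag_le : \sum_k complex.Re (Q k k) <= rho.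
  move: trQ; rewrite lecE => /andP[_].
  by rewrite /mxtrace (big_morph _ (@ReD R) (erefl (complex.Re (0 : R[i])))).
have sum_ge0 (P : pred 'I_t) : 0 <= \sum_(k | P k) complex.Re (Q k k).
  by apply: sumr_ge0 => k _; exact: (diag k).2.
have [<-|neq_ij] := eqVneq i j.
  have [-> Qii_ge0] := diag i.
  have Qii_le : complex.Re (Q i i) <= rho.
    by apply: le_trans sum_diag_le; rewrite (bigD1 i) //= lerDl.
  by rewrite normr0 ger0_norm //; split => //; exact: le_trans Qii_le.
have Qij_le : complex.Re (Q i i) + complex.Re (Q j j) <= rho.
  apply: le_trans sum_diag_le.
  by rewrite (bigD1 i) //= (bigD1 j) 1?eq_sym //= addrA lerDl.
(* Testing Q against e_i + z e_j for z = 1, -1, i, -i bounds 2 |Re Q_ij| and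
   2 |Im Q_ij| by Q_ii + Q_jj. *)
have pair_ge0 z : 0 <= Q i i + z * Q i j + z^*%C * (Q i j)^*%C + z^*%C * z * Q j j.
  by rewrite -conjQ -quad_form_pair; apply: psdQ.
move: (diag i) (diag j) Qij_le (pair_ge0 1) (pair_ge0 (-1)) (pair_ge0 'i%C) (pair_ge0 (- 'i%C)).
case: (Q i i) (Q j j) (Q i j) => p p' [q q'] [a b] /= [-> p_ge0] [-> q_ge0] Qij_le.
rewrite !lecE /= => /andP[_ h1] /andP[_ h2] /andP[_ h3] /andP[_ h4].
by split; rewrite ler_norml; apply/andP; split; lra.
Qed.

Lemma U_set0 (rho : R) : 0 <= rho -> U_set rho (0 : 'M[R[i]]_t).
Proof.
move=> rho_ge0; split; last by rewrite mxtrace0 lecE /= eqxx.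
split; first by apply/matrixP => i j; rewrite /mxH !mxE conjc0.
by move=> v; rewrite mulmx0 mul0mx mxE.
Qed.

End PsdEntries.

Section Coordinates.
Variables (R : realType) (t : nat).
Local Notation X := 'rV[R]_#|{: 'I_t * 'I_t * bool}|.
Local Notation cont := (fun g : X -> R => continuous g).

Definition mx_of_coords (c : X) : 'M[R[i]]_t :=
  \matrix_(i, j) Complex (c ord0 (enum_rank (i, j, false)))
                         (c ord0 (enum_rank (i, j, true))).

Definition coords_of_mx (Q : 'M[R[i]]_t) : X := \row_k mx_coords Q (enum_val k).

Lemma coords_of_mxK : cancel coords_of_mx mx_of_coords.
Proof. by move=> Q; apply/matrixP => i j; rewrite !mxE !enum_rankK /mx_coords; case: (Q i j). Qed.

Lemma mxgood_mx_of_coords : mxgood cont mx_of_coords.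
Proof. by move=> i j; split; under eq_fun do rewrite mxE; exact: coord_continuous. Qed.

Lemma compact_U_set_coords (rho : R) : compact [set c : X | U_set rho (mx_of_coords c)].
Proof.
have box : compact [set c : X | forall k, c ord0 k \in `[- rho, rho]].
  by apply: (@rV_compact _ _ (fun=> `[- rho, rho]%classic)) => _; exact: segment_compact.
apply: subclosed_compact (closed_U_set_preimage mxgood_mx_of_coords) box _ => c Uc k.
rewrite -(enum_valK k); case: (enum_val k) => [[i j] b].
have := U_set_entry_bound Uc i j; rewrite !mxE /= !in_itv /= -!ler_norml.
by case: b => -[].
Qed.

End Coordinates.

Section Outage.
Variables (d : measure_display) (T : measurableType d) (R : realType) (t r : nat).
Variables (Fre Fim : 'I_t -> 'I_r -> T -> R).
Hypotheses (mFre : forall i j, measurable_fun setT (Fre i j))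
  (mFim : forall i j, measurable_fun setT (Fim i j)).

Lemma measurable_Re_det_chan (Q : 'M[R[i]]_t) :
  measurable_fun setT
    (fun w => complex.Re (\det (1%:M + mxH (rmx Fre Fim w) *m Q *m rmx Fre Fim w))).
Proof.
apply: (good_Re_det_chan (good := fun g : T -> R => measurable_fun setT g)).
- by move=> c; exact: measurable_cst.
- by move=> f g; exact: measurable_funD.
- by move=> f g; exact: measurable_funM.
- by move=> f; exact: measurable_funN.
- by move=> i j; split; under eq_fun do rewrite mxE; [exact: mFre | exact: mFim].
- by apply: mxgood_cst => c; exact: measurable_cst.
Qed.

Lemma measurable_outage_event (Q : 'M[R[i]]_t) (Rate : R) :
  measurable (outage_event Fre Fim Q Rate).
Proof.
have := measurable_Re_det_chan Q measurableT (open_measurable (open_ln_lt (a := Rate))).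
by rewrite setTI.
Qed.

Lemma open_outage_event_coords (Rate : R) w :
  open [set c | outage_event Fre Fim (@mx_of_coords R t c) Rate w].
Proof.
apply: (continuousP _).1 (open_ln_lt (a := Rate)).
exact/continuous_Re_det_chan/mxgood_mx_of_coords.
Qed.

End Outage.

Theorem proposition1 (R : realType) (d : measure_display) (T : measurableType d)
  (P : probability T R) (t r : nat)
  (Hre Him : 'I_t -> 'I_r -> {RV P >-> R})
  (* E[ ||H||_F^2 ] < oo *)
  (hmom : (\int[P]_w (frob2 (rmx (fun i j => Hre i j) (fun i j => Him i j) w))%:E
             < +oo)%E)
  (* the law of H is absolutely continuous w.r.t. Lebesgue measure on C^{t x r} *)
  (hac : forall A : set ('I_t * 'I_r * bool -> R), lebesgue_null A ->
     forall E : set T, measurable E ->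
       E `<=` [set w | A (mx_coords (rmx (fun i j => Hre i j) (fun i j => Him i j) w))] ->
       P E = 0%E)
  (rho : R) (hrho : 0 < rho) (Rate : R) (hRate : 0 <= Rate) :
  exists2 Q0 : 'M[R[i]]_t, U_set rho Q0 &
    forall Q : 'M[R[i]]_t, U_set rho Q ->
      (P (outage_event (fun i j => Hre i j) (fun i j => Him i j) Q0 Rate)
        <= P (outage_event (fun i j => Hre i j) (fun i j => Him i j) Q Rate))%E.
Proof.
pose E c := outage_event (fun i j => Hre i j) (fun i j => Him i j) (mx_of_coords c) Rate.
have mHre i j : measurable_fun setT (Hre i j) by exact: measurable_funP.
have mHim i j : measurable_fun setT (Him i j) by exact: measurable_funP.
have mE c : measurable (E c) by exact: measurable_outage_event.
pose psi c := fine (P (E c)).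
have PE c : P (E c) = (psi c)%:E by rewrite fineK ?fin_num_measure.
have lsc_psi : lower_semicontinuous (fun c => (psi c)%:E).
  rewrite (_ : (fun c => _) = fun c => P (E c)); last by apply/funext => c; rewrite PE.
  by apply: lower_semicontinuous_measure_family => // w; exact: open_outage_event_coords.
have U0 : [set c | U_set rho (@mx_of_coords R t c)] !=set0.
  by exists (coords_of_mx 0); rewrite /= coords_of_mxK; exact: (U_set0 _ (ltW hrho)).
have [c Uc c_min] := lower_semicontinuous_compact_min
  (@compact_U_set_coords R t rho) U0 lsc_psi.
exists (mx_of_coords c) => [|Q]; first exact: Uc.
rewrite -(coords_of_mxK Q); move: (coords_of_mx Q) => c' Uc'.
rewrite [X in (X <= _)%E](PE c) [X in (_ <= X)%E](PE c') lee_fin.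
exact: c_min.
Qed.
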